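(* Let $p$ be a prime and let $R$ be a local nearring which is not a nearfield, whose additive group is $G_3=\langle a\rangle+\langle b\rangle$ with $ap^2=0$, $bp=0$, $a+b=b+a$, and suppose $a$ is the identity element of $R$. Write $x=ax_1+bx_2$ ($0\le x_1<p^2$, $0\le x_2<p$) and define $\alpha\colon R\to\mathbb Z_{p^2}$, $\beta\colon R\to\mathbb Z_p$ by $xb=a\alpha(x)+b\beta(x)$. Then for $x=ax_1+bx_2$, $y=ay_1+by_2$, $$xy=a(x_1y_1+\alpha(x)y_2)+b(x_2y_1+\beta(x)y_2),$$ and moreover: (0) $\alpha(0)=\beta(0)=0$ if and only if $R$ is zero-symmetric; (1) $\alpha(a)=0$ and $\beta(a)=1$; (2) $\alpha(x)\equiv0\pmod p$; (3) $\alpha(xy)\equiv x_1\alpha(y)+\alpha(x)\beta(y)\pmod p$; (4) $\beta(xy)\equiv x_2\alpha(y)+\beta(x)\beta(y)\pmod p$.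
   Context: A (left) nearring is a set $R$ with operations $+,\cdot$ such that $(R,+)$ is a group with neutral element $0$, $(R,\cdot)$ a semigroup, and $x(y+z)=xy+xz$ for all $x,y,z$. A nearring with identity is local if its non-invertible elements form a subgroup of $(R,+)$; a nearfield is a nearring with identity in which every nonzero element is invertible. $R$ is zero-symmetric if $0\cdot x=0$ for all $x$. Additive notation: $gk$ is $g$ added $k$ times. *)

From HB Require Import structures.
From mathcomp Require Import all_boot all_order all_algebra.
Set Implicit Arguments. Unset Strict Implicit. Unset Printing Implicit Defensive.
Import GRing.Theory.
Local Open Scope ring_scope.

(* The additive group G_3 = <a> + <b>, a p^2 = 0, b p = 0, a + b = b + a,
   realised concretely as Z_{p^2} x Z_p (p prime, so both moduli are >= 2). *)
Definition G3 (p : nat) : Type := ('Z_(p ^ 2) * 'Z_p)%type.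

Definition gzero (p : nat) : G3 p := (0, 0).
Definition gadd (p : nat) (x y : G3 p) : G3 p := (x.1 + y.1, x.2 + y.2).
Definition gopp (p : nat) (x : G3 p) : G3 p := (- x.1, - x.2).

Definition ga (p : nat) : G3 p := (1, 0).
Definition gb (p : nat) : G3 p := (0, 1).

Definition comb (p : nat) (k l : nat) : G3 p := (k%:R, l%:R).

Definition coord1 (p : nat) (x : G3 p) : nat := nat_of_ord x.1.
Definition coord2 (p : nat) (x : G3 p) : nat := nat_of_ord x.2.

Definition is_nearring (p : nat) (mul : G3 p -> G3 p -> G3 p) : Prop :=
  (forall x y z, mul x (mul y z) = mul (mul x y) z) /\
  (forall x y z, mul x (gadd y z) = gadd (mul x y) (mul x z)).

Definition is_identity (p : nat) (mul : G3 p -> G3 p -> G3 p) (e : G3 p) : Prop :=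
  forall x, mul e x = x /\ mul x e = x.

Definition invertible (p : nat) (mul : G3 p -> G3 p -> G3 p) (e x : G3 p) : Prop :=
  exists y, mul x y = e /\ mul y x = e.

(* local: the non-invertible elements form a subgroup of (R,+) *)
Definition is_local (p : nat) (mul : G3 p -> G3 p -> G3 p) (e : G3 p) : Prop :=
  is_identity mul e /\
  ~ invertible mul e (gzero p) /\
  (forall x y, ~ invertible mul e x -> ~ invertible mul e y ->
               ~ invertible mul e (gadd x (gopp y))).

Definition is_nearfield (p : nat) (mul : G3 p -> G3 p -> G3 p) (e : G3 p) : Prop :=
  is_identity mul e /\ (forall x, x <> gzero p -> invertible mul e x).

Definition zero_symmetric (p : nat) (mul : G3 p -> G3 p -> G3 p) : Prop :=
  forall x, mul (gzero p) x = gzero p.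

Definition alpha (p : nat) (mul : G3 p -> G3 p -> G3 p) (x : G3 p) : 'Z_(p ^ 2) :=
  (mul x (gb p)).1.
Definition beta (p : nat) (mul : G3 p -> G3 p -> G3 p) (x : G3 p) : 'Z_p :=
  (mul x (gb p)).2.

(* Since [a] is the identity, left distributivity makes [x y] additive in [y],
   so [x (a y1 + b y2) = x y1 + (x b) y2]: the multiplication is determined by
   [x b = a alpha(x) + b beta(x)].  Applying [x] to [b p = 0] gives
   [alpha(x) p = 0] in [Z_(p^2)], i.e. [p | alpha(x)], and computing
   [(x y) b = x (y b)] with the product formula yields the congruences for
   [alpha (x y)] and [beta (x y)]. *)
From mathcomp Require Import all_boot all_order all_algebra.
Import GRing.Theory.
Set Implicit Arguments. Unset Strict Implicit.
Local Open Scope ring_scope.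

Definition gmuln (p : nat) (x : G3 p) (k : nat) : G3 p := (x.1 *+ k, x.2 *+ k).

Lemma comb_gmuln (p k l : nat) :
  comb p k l = gadd (gmuln (ga p) k) (gmuln (gb p) l).
Proof. by rewrite /comb /gadd /gmuln /= !mul0rn addr0 add0r. Qed.

Lemma comb_coord (p : nat) (x : G3 p) : comb p (coord1 x) (coord2 x) = x.
Proof. by case: x => x1 x2; rewrite /comb /coord1 /coord2 !natr_Zp. Qed.

Lemma gmuln_gb_p (p : nat) : (1 < p)%N -> gmuln (gb p) p = gzero p.
Proof.
move=> p_gt1; rewrite /gmuln /gzero /= mul0rn; congr pair.
by apply: val_inj; rewrite /= val_Zp_nat // modnn.
Qed.

Section LeftDistributiveMul.

Variables (p : nat) (mul : G3 p -> G3 p -> G3 p).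
Hypothesis p_gt1 : (1 < p)%N.
Hypothesis mul_gaddr : forall x y z, mul x (gadd y z) = gadd (mul x y) (mul x z).

Lemma mul_gzero (x : G3 p) : mul x (gzero p) = gzero p.
Proof.
have := mul_gaddr x (gzero p) (gzero p).
rewrite /gadd /gzero /= !addr0; case: (mul x (0, 0)) => u v [u0 v0].
by congr pair; [apply: (@addrI _ u) | apply: (@addrI _ v)]; rewrite addr0.
Qed.

Lemma mul_gmuln (x y : G3 p) (k : nat) : mul x (gmuln y k) = gmuln (mul x y) k.
Proof.
elim: k => [|k IHk]; first by rewrite /gmuln !mulr0n mul_gzero.
have -> : gmuln y k.+1 = gadd y (gmuln y k) by rewrite /gmuln /gadd !mulrS.
by rewrite mul_gaddr IHk /gmuln /gadd /= !mulrS.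
Qed.

Lemma alpha_mulr_p (x : G3 p) : alpha mul x *+ p = 0.
Proof.
have := mul_gmuln x (gb p) p.
by rewrite gmuln_gb_p // mul_gzero => /(congr1 fst).
Qed.

Lemma dvdn_alpha (x : G3 p) : (p %| alpha mul x)%N.
Proof.
have p2_gt1 : (1 < p ^ 2)%N by rewrite (ltn_exp2l 0).
have /(congr1 val) : ((alpha mul x * p)%N%:R : 'Z_(p ^ 2)) = 0.
  by rewrite natrM natr_Zp mulr_natr alpha_mulr_p.
rewrite /= val_Zp_nat // => alpha_p0.
have : (p * p %| alpha mul x * p)%N by rewrite mulnn /dvdn alpha_p0.
by rewrite dvdn_pmul2r // ltnW.
Qed.

Hypothesis mul_gar : forall x, mul x (ga p) = x.

Lemma mul_comb (x y : G3 p) :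
  mul x y =
  comb p (coord1 x * coord1 y + alpha mul x * coord2 y)%N
         (coord2 x * coord1 y + beta mul x * coord2 y)%N.
Proof.
rewrite -{1}(comb_coord y) comb_gmuln mul_gaddr !mul_gmuln mul_gar.
rewrite /gadd /gmuln /comb /alpha /beta /coord1 /coord2 /=.
by congr pair; rewrite natrD !natrM !mulr_natr !natr_Zp.
Qed.

Lemma zero_symmetricP :
  (alpha mul (gzero p) = 0 /\ beta mul (gzero p) = 0) <-> zero_symmetric mul.
Proof.
split=> [[a0 b0] y | zs]; last by rewrite /alpha /beta zs.
by rewrite mul_comb a0 b0 /coord1 /coord2 /= !mul0n !add0n.
Qed.

Hypothesis mul_gassoc : forall x y z, mul x (mul y z) = mul (mul x y) z.

Lemma alpha_mul (x y : G3 p) :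
  alpha mul (mul x y) =
  (coord1 x * alpha mul y + alpha mul x * beta mul y)%N %[mod p].
Proof.
rewrite /alpha -mul_gassoc mul_comb /= val_Zp_nat ?modn_dvdm ?dvdn_exp //.
by rewrite (ltn_exp2l 0).
Qed.

Lemma beta_mul (x y : G3 p) :
  beta mul (mul x y) =
  (coord2 x * alpha mul y + beta mul x * beta mul y)%N %[mod p].
Proof. by rewrite /beta -mul_gassoc mul_comb /= val_Zp_nat ?modn_mod. Qed.

End LeftDistributiveMul.

Theorem lemma9 (p : nat) (mul : G3 p -> G3 p -> G3 p) :
  prime p ->
  is_nearring mul ->
  is_local mul (ga p) ->
  ~ is_nearfield mul (ga p) ->
  (forall x y : G3 p,
      mul x y =
      comb p (coord1 x * coord1 y + nat_of_ord (alpha mul x) * coord2 y)%N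
             (coord2 x * coord1 y + nat_of_ord (beta mul x) * coord2 y)%N) /\
  ((alpha mul (gzero p) = 0%R /\ beta mul (gzero p) = 0%R) <-> zero_symmetric mul) /\
  (alpha mul (ga p) = 0%R /\ beta mul (ga p) = 1%R) /\
  (forall x : G3 p, (p %| nat_of_ord (alpha mul x))%N) /\
  (forall x y : G3 p,
      nat_of_ord (alpha mul (mul x y)) =
      (coord1 x * nat_of_ord (alpha mul y) + nat_of_ord (alpha mul x) * nat_of_ord (beta mul y))%N
      %[mod p]) /\
  (forall x y : G3 p,
      nat_of_ord (beta mul (mul x y)) =
      (coord2 x * nat_of_ord (alpha mul y) + nat_of_ord (beta mul x) * nat_of_ord (beta mul y))%N
      %[mod p]).
Proof.
move=> /prime_gt1 p_gt1 [assoc distr] [id_ga _] _.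
have mul_gar x : mul x (ga p) = x by have [] := id_ga x.
split; first exact: mul_comb.
split; first exact: zero_symmetricP.
split; first by rewrite /alpha /beta (proj1 (id_ga (gb p))).
split; first exact: dvdn_alpha.
by split=> x y; [apply: alpha_mul | apply: beta_mul].
Qed.
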